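(* Let $T$ be a left pre-Hopf monad on a monoidal category $\mathcal C$. The following are equivalent: (i) the functor $\mathfrak h^l\colon\mathcal C\to\mathrm{HM}^l(T)$, $X\mapsto(TX,\mu_X,T_2(\mathbb 1,X))$, is an equivalence of categories; (ii) $T$ is conservative, every left Hopf $T$-module admits a coinvariant part, and $T$ preserves coinvariant parts of left Hopf $T$-modules. If these hold, the functor $\mathbb M\mapsto\mathbb M_T$ (coinvariant part) is quasi-inverse to $\mathfrak h^l$.
   Context: Monoidal categories are strict. A bimonad is a monad $(T,\mu,\eta)$ with comonoidal structure $T_2(X,Y)\colon T(X\otimes Y)\to TX\otimes TY$, $T_0\colon T\mathbb 1\to\mathbb 1$ making $\mu,\eta$ comonoidal. $T$ is a left pre-Hopf monad if $H^l_{\mathbb 1,X}=(T\mathbb 1\otimes\mu_X)T_2(\mathbb 1,TX)$ is invertible for all $X$. $T\mathbb 1$ is a coalgebra in $\mathcal C$ with coproduct $T_2(\mathbb 1,\mathbb 1)$ and counit $T_0$. A left Hopf $T$-module is a triple $(M,r,\rho)$ with $(M,r)$ a $T$-module ($rT(r)=r\mu_M$, $r\eta_M=\mathrm{id}$), $(M,\rho)$ a left $T\mathbb 1$-comodule in $\mathcal C$, and $\rho r=(\mu_{\mathbb 1}\otimes r)T_2(T\mathbb 1,M)T(\rho)$; morphisms are $f\colon M\to N$ with $fr=sT(f)$ and $(T\mathbb 1\otimes f)\rho=\varrho f$; these form the category $\mathrm{HM}^l(T)$. The coinvariant part of $\mathbb M=(M,r,\rho)$ is an equalizer $i\colon\mathbb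 M_T\to M$ of the pair $\eta_{\mathbb 1}\otimes M,\ \rho\colon M\rightrightarrows T\mathbb 1\otimes M$. $T$ preserves coinvariant parts if whenever such an equalizer $i$ exists, $T(i)$ is an equalizer of $T(\eta_{\mathbb 1}\otimes M),T(\rho)$. Conservative: reflects isomorphisms. *)

From Stdlib Require Import ProofIrrelevance.
Set Implicit Arguments.
Unset Strict Implicit.

(** * Categories (Leibniz equality on morphisms) *)
Record Category := {
  Ob :> Type;
  Hom : Ob -> Ob -> Type;
  idm : forall X, Hom X X;
  comp : forall X Y Z, Hom Y Z -> Hom X Y -> Hom X Z;
  comp_assoc : forall X Y Z W (h : Hom Z W) (g : Hom Y Z) (f : Hom X Y),
      comp h (comp g f) = comp (comp h g) f;
  comp_idl : forall X Y (f : Hom X Y), comp (idm Y) f = f;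
  comp_idr : forall X Y (f : Hom X Y), comp f (idm X) = f }.
Arguments Hom {c} X Y.
Arguments idm {c} X.
Arguments comp {c X Y Z} g f.
Arguments comp_assoc {c X Y Z W} h g f.
Arguments comp_idl {c X Y} f.
Arguments comp_idr {c X Y} f.
Notation "g ⊚ f" := (comp g f) (at level 40, left associativity).

Definition is_iso {C : Category} {X Y : C} (f : Hom X Y) : Prop :=
  exists g : Hom Y X, g ⊚ f = idm X /\ f ⊚ g = idm Y.

Definition is_equalizer {C : Category} {A B E : C} (f g : Hom A B) (i : Hom E A)
  : Prop :=
  f ⊚ i = g ⊚ i /\
  forall (E' : C) (j : Hom E' A), f ⊚ j = g ⊚ j -> exists! u : Hom E' E, i ⊚ u = j.

Definition cast {C : Category} {X Y : C} (e : X = Y) : Hom X Y :=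
  match e in _ = Y return Hom X Y with eq_refl => idm X end.

Record Functor (C D : Category) := {
  fob : C -> D;
  fhom : forall X Y : C, Hom X Y -> Hom (fob X) (fob Y);
  fhom_id : forall X, fhom (idm X) = idm (fob X);
  fhom_comp : forall X Y Z (g : Hom Y Z) (f : Hom X Y),
      fhom (g ⊚ f) = fhom g ⊚ fhom f }.
Arguments fob {C D} F X : rename.
Arguments fhom {C D} F {X Y} g : rename.
Arguments fhom_id {C D} F X : rename.
Arguments fhom_comp {C D} F {X Y Z} g h : rename.

Definition quasi_inverse {C D : Category} (F : Functor C D) (G : Functor D C) : Prop :=
  (exists a : forall X : C, Hom (fob G (fob F X)) X,
      (forall (X Y : C) (f : Hom X Y), a Y ⊚ fhom G (fhom F f) = f ⊚ a X) /\
      (forall X, is_iso (a X))) /\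
  (exists b : forall Y : D, Hom (fob F (fob G Y)) Y,
      (forall (X Y : D) (f : Hom X Y), b Y ⊚ fhom F (fhom G f) = f ⊚ b X) /\
      (forall Y, is_iso (b Y))).

Definition is_equivalence {C D : Category} (F : Functor C D) : Prop :=
  exists G : Functor D C, quasi_inverse F G.

(** * Strict monoidal categories
   Strictness: the associativity / unit equations hold on objects, and the
   tensor product of morphisms is strictly associative and unital (modulo the
   transport [cast] along these object equalities). *)
Record StrictMonoidal (C : Category) := {
  tens : C -> C -> C;
  tensh : forall A B A' B' : C, Hom A B -> Hom A' B' -> Hom (tens A A') (tens B B');
  unit : C;
  tensh_id : forall A A' : C, tensh (idm A) (idm A') = idm (tens A A');
  tensh_comp : forall (A B D A' B' D' : C) (g : Hom B D) (f : Hom A B)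
      (g' : Hom B' D') (f' : Hom A' B'),
      tensh (g ⊚ f) (g' ⊚ f') = tensh g g' ⊚ tensh f f';
  tens_assoc : forall X Y Z : C, tens (tens X Y) Z = tens X (tens Y Z);
  tens_unitl : forall X : C, tens unit X = X;
  tens_unitr : forall X : C, tens X unit = X;
  tensh_assoc : forall (A B A' B' A'' B'' : C) (f : Hom A B) (g : Hom A' B') (h : Hom A'' B''),
      cast (tens_assoc B B' B'') ⊚ tensh (tensh f g) h
      = tensh f (tensh g h) ⊚ cast (tens_assoc A A' A'');
  tensh_unitl : forall (A B : C) (f : Hom A B),
      cast (tens_unitl B) ⊚ tensh (idm unit) f = f ⊚ cast (tens_unitl A);
  tensh_unitr : forall (A B : C) (f : Hom A B),
      cast (tens_unitr B) ⊚ tensh f (idm unit) = f ⊚ cast (tens_unitr A) }.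
Arguments tens {C} s X Y.
Arguments tensh {C} s {A B A' B'} f g.
Arguments unit {C} s.
Arguments tens_assoc {C} s X Y Z.
Arguments tens_unitl {C} s X.
Arguments tens_unitr {C} s X.

Section BimonadDef.
Context {C : Category} (M : StrictMonoidal C).
Local Notation "X ⊗ Y" := (tens M X Y) (at level 30).
Local Notation "f ⊗h g" := (tensh M f g) (at level 30).
Local Notation "𝟙" := (unit M).

Record Bimonad := {
  T : Functor C C;
  mu : forall X : C, Hom (fob T (fob T X)) (fob T X);
  eta : forall X : C, Hom X (fob T X);
  T2 : forall X Y : C, Hom (fob T (X ⊗ Y)) (fob T X ⊗ fob T Y);
  T0 : Hom (fob T 𝟙) 𝟙;
  mu_nat : forall (X Y : C) (f : Hom X Y), fhom T f ⊚ mu X = mu Y ⊚ fhom T (fhom T f);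
  eta_nat : forall (X Y : C) (f : Hom X Y), fhom T f ⊚ eta X = eta Y ⊚ f;
  mu_assoc : forall X, mu X ⊚ fhom T (mu X) = mu X ⊚ mu (fob T X);
  mu_etal : forall X, mu X ⊚ eta (fob T X) = idm (fob T X);
  mu_etar : forall X, mu X ⊚ fhom T (eta X) = idm (fob T X);
  T2_nat : forall (X X' Y Y' : C) (f : Hom X X') (g : Hom Y Y'),
      (fhom T f ⊗h fhom T g) ⊚ T2 X Y = T2 X' Y' ⊚ fhom T (f ⊗h g);
  T2_coassoc : forall X Y Z : C,
      (T2 X Y ⊗h idm (fob T Z)) ⊚ T2 (X ⊗ Y) Z
      = cast (eq_sym (tens_assoc M (fob T X) (fob T Y) (fob T Z)))
          ⊚ (idm (fob T X) ⊗h T2 Y Z) ⊚ T2 X (Y ⊗ Z) ⊚ fhom T (cast (tens_assoc M X Y Z));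
  T2_counitl : forall X : C,
      (T0 ⊗h idm (fob T X)) ⊚ T2 𝟙 X
      = cast (eq_sym (tens_unitl M (fob T X))) ⊚ fhom T (cast (tens_unitl M X));
  T2_counitr : forall X : C,
      (idm (fob T X) ⊗h T0) ⊚ T2 X 𝟙
      = cast (eq_sym (tens_unitr M (fob T X))) ⊚ fhom T (cast (tens_unitr M X));
  mu_T2 : forall X Y : C,
      T2 X Y ⊚ mu (X ⊗ Y) = (mu X ⊗h mu Y) ⊚ T2 (fob T X) (fob T Y) ⊚ fhom T (T2 X Y);
  mu_T0 : T0 ⊚ mu 𝟙 = T0 ⊚ fhom T T0;
  eta_T2 : forall X Y : C, T2 X Y ⊚ eta (X ⊗ Y) = eta X ⊗h eta Y;
  eta_T0 : T0 ⊚ eta 𝟙 = idm 𝟙 }.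
End BimonadDef.
Arguments T {C M} b.
Arguments mu {C M} b X.
Arguments eta {C M} b X.
Arguments T2 {C M} b X Y.
Arguments T0 {C M} b.

Section CastLemmas.
Context {C : Category}.

Lemma cast_refl (X : C) : cast (eq_refl X) = idm X.
Proof. reflexivity. Qed.

Lemma cast_comp (X Y Z : C) (e1 : X = Y) (e2 : Y = Z) :
  cast e2 ⊚ cast e1 = cast (eq_trans e1 e2).
Proof. destruct e2; simpl; apply comp_idl. Qed.

Lemma cast_irr (X Y : C) (e e' : X = Y) : cast e = cast e'.
Proof. rewrite (proof_irrelevance _ e e'); reflexivity. Qed.

Lemma cast_id (X : C) (e : X = X) : cast e = idm X.
Proof. rewrite (cast_irr e eq_refl); reflexivity. Qed.

Lemma fhom_cast (D : Category) (F : Functor C D) (X Y : C) (e : X = Y) :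
  fhom F (cast e) = cast (f_equal (fob F) e).
Proof. destruct e; simpl; apply fhom_id. Qed.

Lemma tensh_cast (M : StrictMonoidal C) (A B A' B' : C) (e : A = B) (e' : A' = B') :
  tensh M (cast e) (cast e') = cast (f_equal2 (tens M) e e').
Proof. destruct e, e'; transitivity (idm (tens M A A')); [exact (tensh_id M A A') | symmetry; apply cast_id]. Qed.
End CastLemmas.

Section HopfModules.
Context {C : Category} {M : StrictMonoidal C} (B : Bimonad M).
Local Notation "X ⊗ Y" := (tens M X Y) (at level 30).
Local Notation "f ⊗h g" := (tensh M f g) (at level 30).
Local Notation "𝟙" := (unit M).
Local Notation TT := (fob (T B)).
Local Notation Th := (fhom (T B)).

Definition Hl (X : C) : Hom (TT (𝟙 ⊗ TT X)) (TT 𝟙 ⊗ TT X) :=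
  (idm (TT 𝟙) ⊗h mu B X) ⊚ T2 B 𝟙 (TT X).
Definition left_pre_Hopf : Prop := forall X : C, is_iso (Hl X).

(** coproduct of the coalgebra T1: T_2(1,1) (with T(1) = T(1 ⊗ 1)) *)
Definition T1_coprod : Hom (TT 𝟙) (TT 𝟙 ⊗ TT 𝟙) :=
  T2 B 𝟙 𝟙 ⊚ Th (cast (eq_sym (tens_unitl M 𝟙))).

Record HMob := {
  hcar : C;
  hact : Hom (TT hcar) hcar;
  hcoact : Hom hcar (TT 𝟙 ⊗ hcar);
  hact_assoc : hact ⊚ Th hact = hact ⊚ mu B hcar;
  hact_unit : hact ⊚ eta B hcar = idm hcar;
  hcoact_coassoc : (T1_coprod ⊗h idm hcar) ⊚ hcoact
      = cast (eq_sym (tens_assoc M (TT 𝟙) (TT 𝟙) hcar)) ⊚ (idm (TT 𝟙) ⊗h hcoact) ⊚ hcoact;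
  hcoact_counit : (T0 B ⊗h idm hcar) ⊚ hcoact = cast (eq_sym (tens_unitl M hcar));
  hcompat : hcoact ⊚ hact = (mu B 𝟙 ⊗h hact) ⊚ T2 B (TT 𝟙) hcar ⊚ Th hcoact }.

Record HMhom (P Q : HMob) := {
  hmap : Hom (hcar P) (hcar Q);
  hmap_act : hmap ⊚ hact P = hact Q ⊚ Th hmap;
  hmap_coact : (idm (TT 𝟙) ⊗h hmap) ⊚ hcoact P = hcoact Q ⊚ hmap }.
Arguments hmap {P Q} h.

Lemma HMhom_ext (P Q : HMob) (f g : HMhom P Q) : hmap f = hmap g -> f = g.
Proof.
  destruct f as [f f1 f2], g as [g g1 g2]; simpl; intros ->.
  rewrite (proof_irrelevance _ f1 g1), (proof_irrelevance _ f2 g2); reflexivity.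
Qed.

Program Definition HMid (P : HMob) : HMhom P P := {| hmap := idm (hcar P) |}.
Next Obligation. intros; now rewrite comp_idl, fhom_id, comp_idr. Qed.
Next Obligation. intros; now rewrite tensh_id, comp_idl, comp_idr. Qed.

Program Definition HMcomp (P Q R : HMob) (g : HMhom Q R) (f : HMhom P Q) : HMhom P R :=
  {| hmap := hmap g ⊚ hmap f |}.
Next Obligation.
  intros. rewrite <- comp_assoc, hmap_act, comp_assoc, hmap_act, <- comp_assoc, fhom_comp.
  reflexivity.
Qed.
Next Obligation.
  intros. rewrite <- (comp_idl (idm (TT 𝟙))), tensh_comp, <- comp_assoc, hmap_coact,
    comp_assoc, hmap_coact, comp_assoc; reflexivity.
Qed.

Program Definition HM : Category :=
  {| Ob := HMob; Hom := HMhom; idm := HMid; comp := HMcomp |}.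
Next Obligation. intros; apply HMhom_ext; simpl; apply comp_assoc. Qed.
Next Obligation. intros; apply HMhom_ext; simpl; apply comp_idl. Qed.
Next Obligation. intros; apply HMhom_ext; simpl; apply comp_idr. Qed.

(** the functor h^l : X ↦ (TX, μ_X, T_2(1,X)) (with X = 1 ⊗ X) *)
Definition hl_coact (X : C) : Hom (TT X) (TT 𝟙 ⊗ TT X) :=
  T2 B 𝟙 X ⊚ Th (cast (eq_sym (tens_unitl M X))).

Lemma hl_counit (X : C) :
  (T0 B ⊗h idm (TT X)) ⊚ hl_coact X = cast (eq_sym (tens_unitl M (TT X))).
Proof.
  unfold hl_coact. rewrite comp_assoc, T2_counitl, <- comp_assoc, <- fhom_comp,
    cast_comp, cast_id, fhom_id, comp_idr. reflexivity.
Qed.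

Lemma tensh_comp_idl (A X Y Z : C) (g : Hom Y Z) (f : Hom X Y) :
  idm A ⊗h (g ⊚ f) = (idm A ⊗h g) ⊚ (idm A ⊗h f).
Proof. rewrite <- tensh_comp, comp_idl; reflexivity. Qed.

Lemma tensh_comp_idr (A X Y Z : C) (g : Hom Y Z) (f : Hom X Y) :
  (g ⊚ f) ⊗h idm A = (g ⊗h idm A) ⊚ (f ⊗h idm A).
Proof. rewrite <- tensh_comp, comp_idl; reflexivity. Qed.

Lemma T2_nat_l (Z Y Y' : C) (g : Hom Y Y') :
  (idm (TT Z) ⊗h Th g) ⊚ T2 B Z Y = T2 B Z Y' ⊚ Th (idm Z ⊗h g).
Proof. rewrite <- (fhom_id (T B) Z); apply T2_nat. Qed.

Lemma T2_nat_r (Z Y Y' : C) (g : Hom Y Y') :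
  (Th g ⊗h idm (TT Z)) ⊚ T2 B Y Z = T2 B Y' Z ⊚ Th (g ⊗h idm Z).
Proof. rewrite <- (fhom_id (T B) Z); apply T2_nat. Qed.

Lemma T2_nat_l' (Z Y Y' W : C) (g : Hom Y Y') (h : Hom (TT Z ⊗ TT Y') W) :
  h ⊚ (idm (TT Z) ⊗h Th g) ⊚ T2 B Z Y = h ⊚ T2 B Z Y' ⊚ Th (idm Z ⊗h g).
Proof. rewrite <- !comp_assoc, T2_nat_l; reflexivity. Qed.

Lemma T2_nat_r' (Z Y Y' W : C) (g : Hom Y Y') (h : Hom (TT Y' ⊗ TT Z) W) :
  h ⊚ (Th g ⊗h idm (TT Z)) ⊚ T2 B Y Z = h ⊚ T2 B Y' Z ⊚ Th (g ⊗h idm Z).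
Proof. rewrite <- !comp_assoc, T2_nat_r; reflexivity. Qed.

Lemma hl_coassoc (X : C) :
  (T1_coprod ⊗h idm (TT X)) ⊚ hl_coact X
  = cast (eq_sym (tens_assoc M (TT 𝟙) (TT 𝟙) (TT X))) ⊚ (idm (TT 𝟙) ⊗h hl_coact X)
      ⊚ hl_coact X.
Proof.
  unfold hl_coact, T1_coprod.
  rewrite tensh_comp_idr, tensh_comp_idl, !comp_assoc, T2_nat_r', T2_nat_l'.
  rewrite T2_coassoc, ?comp_assoc.
  rewrite <- !comp_assoc. do 3 f_equal.
  rewrite <- !fhom_comp. f_equal.
  rewrite <- (cast_refl X), <- (cast_refl 𝟙), !tensh_cast, !cast_comp.
  apply cast_irr.
Qed.

Lemma hl_compat (X : C) :
  hl_coact X ⊚ mu B X = (mu B 𝟙 ⊗h mu B X) ⊚ T2 B (TT 𝟙) (TT X) ⊚ Th (hl_coact X).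
Proof.
  unfold hl_coact. rewrite <- comp_assoc, mu_nat, comp_assoc, mu_T2, fhom_comp,
    !comp_assoc. reflexivity.
Qed.

Definition hl_ob (X : C) : HMob :=
  {| hcar := TT X; hact := mu B X; hcoact := hl_coact X;
     hact_assoc := mu_assoc B X; hact_unit := mu_etal B X;
     hcoact_coassoc := hl_coassoc X; hcoact_counit := hl_counit X;
     hcompat := hl_compat X |}.

Lemma hl_hom_coact (X Y : C) (f : Hom X Y) :
  (idm (TT 𝟙) ⊗h Th f) ⊚ hl_coact X = hl_coact Y ⊚ Th f.
Proof.
  unfold hl_coact. rewrite <- (fhom_id (T B) 𝟙), comp_assoc, T2_nat, <- !comp_assoc,
    <- !fhom_comp. f_equal. f_equal.
  assert (H := tensh_unitl M f).
  rewrite <- (comp_idl (_ ⊚ cast (eq_sym (tens_unitl M X)))).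
  rewrite <- (cast_id (eq_trans (tens_unitl M Y) (eq_sym (tens_unitl M Y)))),
    <- cast_comp, <- !comp_assoc, (comp_assoc (cast (tens_unitl M Y))), H,
    <- comp_assoc, cast_comp, cast_id, comp_idr. reflexivity.
Qed.

Definition hl_hom (X Y : C) (f : Hom X Y) : HMhom (hl_ob X) (hl_ob Y) :=
  @Build_HMhom (hl_ob X) (hl_ob Y) (Th f) (mu_nat B f) (hl_hom_coact f).

Program Definition hl : Functor C HM := {| fob := hl_ob; fhom := hl_hom |}.
Next Obligation. intros; apply HMhom_ext; simpl; apply fhom_id. Qed.
Next Obligation. intros; apply HMhom_ext; simpl; apply fhom_comp. Qed.

Local Unset Implicit Arguments.
Definition conservative : Prop :=
  forall (X Y : C) (f : Hom X Y), is_iso (Th f) -> is_iso f.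

Definition eta1_tens (P : HMob) : Hom (hcar P) (TT 𝟙 ⊗ hcar P) :=
  (eta B 𝟙 ⊗h idm (hcar P)) ⊚ cast (eq_sym (tens_unitl M (hcar P))).

Definition is_coinvariant_part (P : HMob) {E : C} (i : Hom E (hcar P)) : Prop :=
  is_equalizer (eta1_tens P) (hcoact P) i.

Definition admits_coinvariant_parts : Prop :=
  forall P : HMob, exists (E : C) (i : Hom E (hcar P)), is_coinvariant_part P i.

Definition preserves_coinvariant_parts : Prop :=
  forall (P : HMob) (E : C) (i : Hom E (hcar P)), is_coinvariant_part P i ->
    is_equalizer (Th (eta1_tens P)) (Th (hcoact P)) (Th i).

Definition coinvariant_functor (K : Functor HM C) (i : forall P : HMob, Hom (fob K P) (hcar P))
  : Prop :=
  (forall P : HMob, is_coinvariant_part P (i P)) /\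
  (forall (P Q : HMob) (f : HMhom P Q), i Q ⊚ fhom K f = hmap f ⊚ i P).
End HopfModules.

(* Under the pre-Hopf hypothesis every T-module (P, r) satisfies T P ≅ T1 ⊗ P through
   the fusion map (T1 ⊗ r) T_2(1, P). Hence the free Hopf module h^l X has coinvariant
   part η_X, preserved by T, and for a Hopf module M whose coinvariant part i is
   preserved by T, the counit r T(i) : T(M_T) → M is invertible, its inverse being the
   factorisation of fusion⁻¹ ρ through T(i). Together with conservativity this makes
   the coinvariant-part functor quasi-inverse to h^l. Conversely, an equivalence makes
   every Hopf module isomorphic to a free one, so coinvariant parts exist, are of the
   form η_X up to isomorphism, and are therefore preserved by T. *)
From Stdlib Require Import ClassicalEpsilon.
Set Implicit Arguments.
Unset Strict Implicit.

Ltac reassoc := repeat rewrite <- comp_assoc.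

Lemma compA_rw {C : Category} {X Y Z W : C} (a : Hom Y Z) (b : Hom X Y) (c : Hom X Z) :
  a ⊚ b = c -> forall d : Hom W X, a ⊚ (b ⊚ d) = c ⊚ d.
Proof. intros H d; rewrite comp_assoc, H; reflexivity. Qed.

Lemma compA3_rw {C : Category} {X Y Z V W : C}
  (a : Hom Y Z) (b : Hom X Y) (b' : Hom V X) (c : Hom V Z) :
  a ⊚ (b ⊚ b') = c -> forall d : Hom W V, a ⊚ (b ⊚ (b' ⊚ d)) = c ⊚ d.
Proof. intros H d; rewrite (comp_assoc b), (comp_assoc a), H; reflexivity. Qed.

Lemma dependent_functional_choice (A : Type) (P : A -> Type) (Q : forall a, P a -> Prop) :
  (forall a, exists x, Q a x) -> exists f : forall a, P a, forall a, Q a (f a).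
Proof.
  intros H. exists (fun a => proj1_sig (constructive_indefinite_description _ (H a))).
  intros a. exact (proj2_sig (constructive_indefinite_description _ (H a))).
Qed.

Section Isomorphisms.
Context {C : Category}.

Lemma iso_id (X : C) : is_iso (idm X).
Proof. exists (idm X); split; apply comp_idl. Qed.

Lemma iso_comp (X Y Z : C) (g : Hom Y Z) (f : Hom X Y) :
  is_iso g -> is_iso f -> is_iso (g ⊚ f).
Proof.
  intros [g' [Hg1 Hg2]] [f' [Hf1 Hf2]]. exists (f' ⊚ g'); split; reassoc.
  - rewrite (compA_rw Hg1), comp_idl. exact Hf1.
  - rewrite (compA_rw Hf2), comp_idl. exact Hg2.
Qed.

Lemma iso_cast (X Y : C) (e : X = Y) : is_iso (cast e).
Proof. destruct e; apply iso_id. Qed.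

Lemma iso_monic (X Y Z : C) (f : Hom X Y) (u v : Hom Z X) :
  is_iso f -> f ⊚ u = f ⊚ v -> u = v.
Proof.
  intros [g [Hgf _]] H.
  rewrite <- (comp_idl u), <- (comp_idl v), <- Hgf, <- !comp_assoc, H. reflexivity.
Qed.

Lemma iso_epic (X Y Z : C) (f : Hom X Y) (u v : Hom Y Z) :
  is_iso f -> u ⊚ f = v ⊚ f -> u = v.
Proof.
  intros [g [_ Hfg]] H.
  rewrite <- (comp_idr u), <- (comp_idr v), <- Hfg, !comp_assoc, H. reflexivity.
Qed.

Lemma fhom_iso (D : Category) (F : Functor C D) (X Y : C) (f : Hom X Y) :
  is_iso f -> is_iso (fhom F f).
Proof.
  intros [g [H1 H2]]. exists (fhom F g).
  rewrite <- !fhom_comp, H1, H2, !fhom_id. split; reflexivity.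
Qed.
End Isomorphisms.

Section Equalizers.
Context {C : Category} {A B : C} (f g : Hom A B).

Lemma equalizer_monic (E Z : C) (i : Hom E A) (u v : Hom Z E) :
  is_equalizer f g i -> i ⊚ u = i ⊚ v -> u = v.
Proof.
  intros [Hi Huniv] H.
  assert (Hj : f ⊚ (i ⊚ u) = g ⊚ (i ⊚ u)) by (rewrite !comp_assoc, Hi; reflexivity).
  destruct (Huniv _ _ Hj) as [w [_ Hw]].
  rewrite <- (Hw u eq_refl), <- (Hw v (eq_sym H)). reflexivity.
Qed.

Lemma equalizer_comparison_iso (E1 E2 : C) (i1 : Hom E1 A) (i2 : Hom E2 A) (v : Hom E1 E2) :
  is_equalizer f g i1 -> is_equalizer f g i2 -> i1 = i2 ⊚ v -> is_iso v.
Proof.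
  intros H1 H2 Hv. destruct (proj2 H1 _ _ (proj1 H2)) as [w [Hw _]].
  exists w; split.
  - apply (equalizer_monic H1). rewrite comp_assoc, Hw, Hv, comp_idr. reflexivity.
  - apply (equalizer_monic H2). rewrite comp_assoc, <- Hv, Hw, comp_idr. reflexivity.
Qed.

Lemma equalizer_iso_transport (A' B' E E0 : C) (f' g' : Hom A' B')
  (i : Hom E0 A) (a : Hom A A') (c : Hom B B') (v : Hom E E0) :
  is_equalizer f g i -> is_iso a -> is_iso c -> is_iso v ->
  f' ⊚ a = c ⊚ f -> g' ⊚ a = c ⊚ g -> is_equalizer f' g' (a ⊚ i ⊚ v).
Proof.
  intros [Hi Huniv] [a' [Ha1 Ha2]] Hc [v' [Hv1 Hv2]] Hf Hg. split.
  - reassoc. rewrite (compA_rw Hf), (compA_rw Hg). reassoc. rewrite (compA_rw Hi). reassoc. reflexivity.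
  - intros E' j Hj.
    assert (Hj' : f ⊚ (a' ⊚ j) = g ⊚ (a' ⊚ j)).
    { apply (iso_monic Hc). rewrite !comp_assoc, <- Hf, <- Hg. reassoc.
      rewrite (compA_rw Ha2), comp_idl. exact Hj. }
    destruct (Huniv _ _ Hj') as [w [Hw Hwuniq]].
    exists (v' ⊚ w); split.
    + reassoc. rewrite (compA_rw Hv2), comp_idl, Hw, comp_assoc, Ha2, comp_idl. reflexivity.
    + intros u Hu. rewrite (Hwuniq (v ⊚ u)).
      * reassoc. rewrite (compA_rw Hv1), comp_idl. reflexivity.
      * rewrite <- Hu. reassoc. rewrite (compA_rw Ha1), comp_idl. reflexivity.
Qed.
End Equalizers.

Section QuasiInverse.
Context {C D : Category} (F : Functor C D) (G : Functor D C).
Hypothesis FG : quasi_inverse F G.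

Lemma quasi_inverse_faithful (X Y : C) (u v : Hom X Y) : fhom F u = fhom F v -> u = v.
Proof.
  destruct FG as [[a [anat aiso]] _]. intros H.
  apply (iso_epic (aiso X)). rewrite <- !anat, H. reflexivity.
Qed.

Lemma quasi_inverse_reflects_iso (X Y : C) (f : Hom X Y) : is_iso (fhom F f) -> is_iso f.
Proof.
  destruct FG as [[a [anat aiso]] _]. intros HFf.
  destruct (aiso X) as [aX' [HX1 HX2]].
  assert (Hf : f = a Y ⊚ fhom G (fhom F f) ⊚ aX')
    by (rewrite anat, <- comp_assoc, HX2, comp_idr; reflexivity).
  rewrite Hf. apply iso_comp; [apply iso_comp|].
  - apply aiso.
  - apply fhom_iso, HFf.
  - exists (a X); split; assumption.
Qed.

Lemma quasi_inverse_full (X Y : C) (psi : Hom (fob F X) (fob F Y)) :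
  exists u, fhom F u = psi.
Proof.
  pose proof FG as [[a [anat aiso]] [b [bnat biso]]].
  destruct (aiso X) as [aX' [HaX _]].
  exists (a Y ⊚ fhom G psi ⊚ aX').
  assert (GF_faithful : forall (U V : D) (s t : Hom U V), fhom G s = fhom G t -> s = t).
  { intros U V s t H. apply (iso_epic (biso U)). rewrite <- !bnat, H. reflexivity. }
  apply GF_faithful. apply (iso_monic (aiso Y)).
  rewrite anat. reassoc. rewrite HaX, comp_idr. reflexivity.
Qed.
End QuasiInverse.

Section HopfModuleCalculus.
Context {C : Category} {M : StrictMonoidal C} {B : Bimonad M}.
Local Notation "X ⊗ Y" := (tens M X Y) (at level 30).
Local Notation "f ⊗h g" := (tensh M f g) (at level 30).
Local Notation "𝟙" := (unit M).
Local Notation TT := (fob (T B)).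
Local Notation Th := (fhom (T B)).

Definition lunit (X : C) : Hom (𝟙 ⊗ X) X := cast (tens_unitl M X).
Definition lunit_inv (X : C) : Hom X (𝟙 ⊗ X) := cast (eq_sym (tens_unitl M X)).

Lemma lunit_lunit_inv X : lunit X ⊚ lunit_inv X = idm X.
Proof. unfold lunit, lunit_inv. rewrite cast_comp. apply cast_id. Qed.

Lemma lunit_inv_lunit X : lunit_inv X ⊚ lunit X = idm (𝟙 ⊗ X).
Proof. unfold lunit, lunit_inv. rewrite cast_comp. apply cast_id. Qed.

Lemma lunit_nat (X Y : C) (f : Hom X Y) : lunit Y ⊚ (idm 𝟙 ⊗h f) = f ⊚ lunit X.
Proof. apply tensh_unitl. Qed.

Lemma lunit_inv_nat (X Y : C) (f : Hom X Y) :
  (idm 𝟙 ⊗h f) ⊚ lunit_inv X = lunit_inv Y ⊚ f.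
Proof.
  rewrite <- (comp_idl (_ ⊚ lunit_inv X)), <- (lunit_inv_lunit Y). reassoc.
  rewrite (compA_rw (lunit_nat f)). reassoc. rewrite lunit_lunit_inv, comp_idr. reflexivity.
Qed.

Lemma lunit_inv_tens (Y Z : C) :
  cast (eq_sym (tens_assoc M 𝟙 Y Z)) ⊚ lunit_inv (Y ⊗ Z) = lunit_inv Y ⊗h idm Z.
Proof. unfold lunit_inv. rewrite cast_comp, <- cast_refl, tensh_cast. apply cast_irr. Qed.

Lemma tensh_comp_idr_idl (A A' X Y : C) (f : Hom A A') (g : Hom X Y) :
  (f ⊗h idm Y) ⊚ (idm A ⊗h g) = f ⊗h g.
Proof. rewrite <- tensh_comp, comp_idl, comp_idr. reflexivity. Qed.

Lemma tensh_comp_idl_idr (A A' X Y : C) (f : Hom A A') (g : Hom X Y) :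
  (idm A' ⊗h g) ⊚ (f ⊗h idm X) = f ⊗h g.
Proof. rewrite <- tensh_comp, comp_idl, comp_idr. reflexivity. Qed.

Lemma tensh_iso (A A' X Y : C) (f : Hom A A') (g : Hom X Y) :
  is_iso f -> is_iso g -> is_iso (f ⊗h g).
Proof.
  intros [f' [Hf1 Hf2]] [g' [Hg1 Hg2]]. exists (f' ⊗h g').
  rewrite <- !tensh_comp, Hf1, Hf2, Hg1, Hg2, !tensh_id. split; reflexivity.
Qed.

Lemma T_comp (X Y Z : C) (g : Hom Y Z) (f : Hom X Y) : Th g ⊚ Th f = Th (g ⊚ f).
Proof. symmetry; apply fhom_comp. Qed.

Lemma T2_coassoc_inv X Y Z :
  (idm (TT X) ⊗h T2 B Y Z) ⊚ T2 B X (Y ⊗ Z)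
  = cast (tens_assoc M (TT X) (TT Y) (TT Z)) ⊚ ((T2 B X Y ⊗h idm (TT Z)) ⊚
      (T2 B (X ⊗ Y) Z ⊚ Th (cast (eq_sym (tens_assoc M X Y Z))))).
Proof.
  rewrite (comp_assoc (T2 B X Y ⊗h _)), T2_coassoc. reassoc.
  rewrite (compA_rw (cast_comp _ _)), cast_id, comp_idl, T_comp, cast_comp, cast_id,
    fhom_id, comp_idr. reflexivity.
Qed.

Lemma mu_T2_assoc X Y : (mu B X ⊗h mu B Y) ⊚ (T2 B (TT X) (TT Y) ⊚ Th (T2 B X Y))
  = T2 B X Y ⊚ mu B (X ⊗ Y).
Proof. rewrite mu_T2. reassoc. reflexivity. Qed.

Lemma eta1_tens_comp (P : HMob B) (Y : C) (h : Hom Y (hcar P)) :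
  eta1_tens B P ⊚ h = (eta B 𝟙 ⊗h h) ⊚ lunit_inv Y.
Proof.
  unfold eta1_tens. fold (lunit_inv (hcar P)). reassoc.
  rewrite <- lunit_inv_nat, comp_assoc, tensh_comp_idr_idl. reflexivity.
Qed.

Lemma eta1_tens_nat (P Q : HMob B) (phi : Hom (hcar P) (hcar Q)) :
  eta1_tens B Q ⊚ phi = (idm (TT 𝟙) ⊗h phi) ⊚ eta1_tens B P.
Proof.
  rewrite eta1_tens_comp. unfold eta1_tens. fold (lunit_inv (hcar P)).
  rewrite comp_assoc, tensh_comp_idl_idr. reflexivity.
Qed.

Lemma HM_iso (P Q : HMob B) (phi : HMhom P Q) :
  is_iso (hmap phi) -> @is_iso (HM B) P Q phi.
Proof.
  intros [g [H1 H2]].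
  assert (Hact : g ⊚ hact Q = hact P ⊚ Th g).
  { rewrite <- (comp_idr (g ⊚ hact Q)), <- (fhom_id (T B)), <- H2, fhom_comp. reassoc.
    rewrite (compA_rw (eq_sym (hmap_act phi))). reassoc. rewrite (compA_rw H1), comp_idl.
    reflexivity. }
  assert (Hcoact : (idm (TT 𝟙) ⊗h g) ⊚ hcoact Q = hcoact P ⊚ g).
  { rewrite <- (comp_idr (_ ⊚ hcoact Q)), <- H2. reassoc.
    rewrite (compA_rw (eq_sym (hmap_coact phi))). reassoc.
    rewrite (compA_rw (eq_sym (tensh_comp_idl _ _ _))), H1, tensh_id, comp_idl. reflexivity. }
  exists (@Build_HMhom _ _ B Q P g Hact Hcoact). split; apply HMhom_ext; assumption.
Qed.

Lemma HM_iso_hmap (P Q : HMob B) (phi : HMhom P Q) :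
  @is_iso (HM B) P Q phi -> is_iso (hmap phi).
Proof.
  intros [g [H1 H2]]. exists (hmap g); split.
  - exact (f_equal (@hmap _ _ B P P) H1).
  - exact (f_equal (@hmap _ _ B Q Q) H2).
Qed.

Lemma hl_coact_eta X : hl_coact B X ⊚ eta B X = (eta B 𝟙 ⊗h eta B X) ⊚ lunit_inv X.
Proof.
  unfold hl_coact. fold (lunit_inv X). reassoc. rewrite eta_nat, comp_assoc, eta_T2.
  reflexivity.
Qed.

Lemma eta_coinvariant X : eta1_tens B (hl_ob B X) ⊚ eta B X = hl_coact B X ⊚ eta B X.
Proof. rewrite eta1_tens_comp, hl_coact_eta. reflexivity. Qed.

Lemma hl_hom_eta_coinvariant (X : C) (P : HMob B) (phi : HMhom (hl_ob B X) P) :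
  eta1_tens B P ⊚ (hmap phi ⊚ eta B X) = hcoact P ⊚ (hmap phi ⊚ eta B X).
Proof.
  rewrite eta1_tens_comp, comp_assoc, <- (hmap_coact phi). simpl. reassoc.
  rewrite hl_coact_eta, comp_assoc, <- tensh_comp, comp_idl. reflexivity.
Qed.

Lemma hl_hom_eq_act_eta (X : C) (P : HMob B) (phi : HMhom (hl_ob B X) P) :
  hmap phi = hact P ⊚ Th (hmap phi ⊚ eta B X).
Proof.
  rewrite <- T_comp, comp_assoc, <- (hmap_act phi). simpl. reassoc.
  rewrite mu_etar, comp_idr. reflexivity.
Qed.

Section FreeExtension.
Variables (X : C) (P : HMob B) (j : Hom X (hcar P)).
Hypothesis j_coinv : eta1_tens B P ⊚ j = hcoact P ⊚ j.

Lemma free_ext_act : (hact P ⊚ Th j) ⊚ mu B X = hact P ⊚ Th (hact P ⊚ Th j).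
Proof.
  reassoc. rewrite mu_nat, comp_assoc, <- hact_assoc. reassoc. rewrite T_comp. reflexivity.
Qed.

Lemma free_ext_coact :
  (idm (TT 𝟙) ⊗h (hact P ⊚ Th j)) ⊚ hl_coact B X = hcoact P ⊚ (hact P ⊚ Th j).
Proof.
  rewrite comp_assoc, hcompat. reassoc.
  rewrite T_comp, <- j_coinv, eta1_tens_comp, <- T_comp.
  rewrite (compA_rw (eq_sym (T2_nat B _ _))). reassoc.
  rewrite (compA_rw (eq_sym (tensh_comp _ _ _ _ _))), mu_etar.
  rewrite <- (comp_idr (idm (TT 𝟙))), tensh_comp. reassoc. reflexivity.
Qed.

Definition free_ext : HMhom (hl_ob B X) P :=
  @Build_HMhom _ _ B (hl_ob B X) P (hact P ⊚ Th j) free_ext_act free_ext_coact.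
End FreeExtension.
End HopfModuleCalculus.

Section PreHopf.
Context {C : Category} {M : StrictMonoidal C} {B : Bimonad M}.
Local Notation "X ⊗ Y" := (tens M X Y) (at level 30).
Local Notation "f ⊗h g" := (tensh M f g) (at level 30).
Local Notation "𝟙" := (unit M).
Local Notation TT := (fob (T B)).
Local Notation Th := (fhom (T B)).
Local Notation lunit := (@lunit _ M).
Local Notation lunit_inv := (@lunit_inv _ M).
Hypothesis pre_Hopf : left_pre_Hopf B.

Definition Hl_inv (X : C) : Hom (TT 𝟙 ⊗ TT X) (TT (𝟙 ⊗ TT X)) :=
  proj1_sig (constructive_indefinite_description _ (pre_Hopf X)).

Lemma Hl_invK X : Hl_inv X ⊚ Hl B X = idm _.
Proof. exact (proj1 (proj2_sig (constructive_indefinite_description _ (pre_Hopf X)))). Qed.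

Lemma Hl_Hl_inv X : Hl B X ⊚ Hl_inv X = idm _.
Proof. exact (proj2 (proj2_sig (constructive_indefinite_description _ (pre_Hopf X)))). Qed.

Lemma Hl_nat (X Y : C) (f : Hom X Y) :
  Hl B Y ⊚ Th (idm 𝟙 ⊗h Th f) = (idm _ ⊗h Th f) ⊚ Hl B X.
Proof.
  unfold Hl. reassoc. rewrite <- T2_nat_l, !comp_assoc. f_equal.
  rewrite <- !tensh_comp, !comp_idl, mu_nat. reflexivity.
Qed.

Lemma Hl_inv_nat (X Y : C) (f : Hom X Y) :
  Hl_inv Y ⊚ (idm _ ⊗h Th f) = Th (idm 𝟙 ⊗h Th f) ⊚ Hl_inv X.
Proof.
  rewrite <- (comp_idr (Hl_inv Y ⊚ _)), <- (Hl_Hl_inv X). reassoc.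
  rewrite (compA_rw (eq_sym (Hl_nat f))). reassoc. rewrite (compA_rw (Hl_invK Y)), comp_idl.
  reflexivity.
Qed.

Lemma Hl_mu X : Hl B X ⊚ Th (idm 𝟙 ⊗h mu B X) = (idm _ ⊗h mu B X) ⊚ Hl B (TT X).
Proof.
  unfold Hl. reassoc. rewrite <- T2_nat_l, !comp_assoc. f_equal.
  rewrite <- !tensh_comp, !comp_idl, mu_assoc. reflexivity.
Qed.

Lemma Hl_inv_mu X :
  Th (idm 𝟙 ⊗h mu B X) ⊚ (Hl_inv (TT X) ⊚ (idm _ ⊗h eta B (TT X))) = Hl_inv X.
Proof.
  apply (iso_monic (pre_Hopf X)). rewrite Hl_Hl_inv, comp_assoc, Hl_mu. reassoc.
  rewrite (compA_rw (Hl_Hl_inv _)), comp_idl, <- tensh_comp, mu_etal, comp_idl, tensh_id.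
  reflexivity.
Qed.

(* Through the isomorphism [Hl X] this is a split fork, with retraction [mu X]. *)
Lemma T_eta_equalizer X :
  is_equalizer (Th (eta1_tens B (hl_ob B X))) (Th (hl_coact B X)) (Th (eta B X)).
Proof.
  split.
  - rewrite !T_comp; f_equal; exact (eta_coinvariant X).
  - intros Y j Hj. exists (mu B X ⊚ j). split.
    + apply (iso_monic (f := Hl B X ⊚ Th (lunit_inv (TT X)))).
      { apply iso_comp; [apply pre_Hopf | apply fhom_iso, iso_cast]. }
      assert (Hl_T_eta : Hl B X ⊚ (Th (lunit_inv (TT X)) ⊚ Th (eta B X)) = hl_coact B X).
      { unfold Hl. rewrite T_comp, <- lunit_inv_nat, <- T_comp. reassoc.
        rewrite (compA_rw (eq_sym (T2_nat_l B _ _))). reassoc.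
        rewrite (compA_rw (eq_sym (tensh_comp _ _ _ _ _))), mu_etar, comp_idl, tensh_id,
          comp_idl. reflexivity. }
      reassoc. rewrite (compA3_rw Hl_T_eta), comp_assoc, hl_compat. reassoc. simpl in Hj.
      rewrite <- Hj. unfold eta1_tens. fold (lunit_inv (TT X)). rewrite <- T_comp. reassoc.
      rewrite (compA_rw (eq_sym (T2_nat_r B _ _))). reassoc.
      rewrite (compA_rw (eq_sym (tensh_comp _ _ _ _ _))), mu_etar, comp_idr.
      unfold Hl. reassoc. reflexivity.
    + intros u Hu. rewrite <- Hu, comp_assoc, mu_etar, comp_idl. reflexivity.
Qed.

Section Fusion.
Variables (P : C) (r : Hom (TT P) P).
Hypothesis r_assoc : r ⊚ Th r = r ⊚ mu B P.
Hypothesis r_unit : r ⊚ eta B P = idm P.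

(* For a T-module (P, r), the analogue of [Hl] with [mu] replaced by the action [r]. *)
Definition fusion : Hom (TT P) (TT 𝟙 ⊗ P) :=
  (idm (TT 𝟙) ⊗h r) ⊚ (T2 B 𝟙 P ⊚ Th (lunit_inv P)).

Definition fusion_inv : Hom (TT 𝟙 ⊗ P) (TT P) :=
  Th (r ⊚ lunit (TT P)) ⊚ (Hl_inv P ⊚ (idm (TT 𝟙) ⊗h eta B P)).

Lemma fusion_fusion_inv : fusion ⊚ fusion_inv = idm _.
Proof.
  assert (Hlr : lunit_inv P ⊚ (r ⊚ lunit (TT P)) = idm 𝟙 ⊗h r).
  { rewrite comp_assoc, <- lunit_inv_nat. reassoc. rewrite lunit_inv_lunit, comp_idr.
    reflexivity. }
  unfold fusion, fusion_inv. reassoc. rewrite (compA_rw (T_comp _ _)), Hlr.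
  rewrite (compA_rw (eq_sym (T2_nat_l B _ _))). reassoc.
  rewrite (compA_rw (eq_sym (tensh_comp _ _ _ _ _))), comp_idl, r_assoc, tensh_comp_idl.
  reassoc. rewrite (compA3_rw (eq_trans (comp_assoc _ _ _) (Hl_Hl_inv P))), comp_idl,
    <- tensh_comp_idl, r_unit, tensh_id.
  reflexivity.
Qed.

Lemma fusion_T_act : fusion ⊚ Th r = (idm _ ⊗h r) ⊚ (Hl B P ⊚ Th (lunit_inv (TT P))).
Proof.
  unfold fusion, Hl. reassoc. rewrite T_comp, <- lunit_inv_nat, <- T_comp.
  rewrite (compA_rw (eq_sym (T2_nat_l B _ _))). reassoc.
  rewrite (compA_rw (eq_sym (tensh_comp _ _ _ _ _))), comp_idl, r_assoc, tensh_comp_idl.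
  reassoc. reflexivity.
Qed.

(* [Th r] is split epi (by [Th (eta P)]), so it suffices to cancel after [Th r]. *)
Lemma fusion_invK : fusion_inv ⊚ fusion = idm _.
Proof.
  assert (H : fusion_inv ⊚ (fusion ⊚ Th r) = Th r).
  { rewrite fusion_T_act. unfold fusion_inv. reassoc.
    rewrite (compA_rw (eq_sym (tensh_comp_idl _ _ _))), <- eta_nat, tensh_comp_idl. reassoc.
    rewrite (compA_rw (Hl_inv_nat r)). reassoc. rewrite (compA_rw (T_comp _ _)).
    assert (E : r ⊚ lunit (TT P) ⊚ (idm 𝟙 ⊗h Th r)
                = r ⊚ lunit (TT P) ⊚ (idm 𝟙 ⊗h mu B P)).
    { reassoc. rewrite !lunit_nat, !comp_assoc, r_assoc. reflexivity. }
    rewrite E, <- T_comp. reassoc. rewrite (compA3_rw (Hl_inv_mu P)).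
    rewrite (compA_rw (Hl_invK P)), comp_idl, T_comp. reassoc.
    rewrite lunit_lunit_inv, comp_idr. reflexivity. }
  rewrite <- (comp_idr (fusion_inv ⊚ fusion)), <- (fhom_id (T B) P), <- r_unit, fhom_comp.
  reassoc. rewrite (compA3_rw H), T_comp, r_unit, fhom_id. reflexivity.
Qed.
End Fusion.

Section CoinvariantCounit.
Variable P : HMob B.
Local Notation Pc := (hcar P).
Local Notation r := (hact P).
Local Notation rho := (hcoact P).

(* The diagonal T-action on [T1 ⊗ P]; [hcompat] says that [rho] is T-linear for it. *)
Definition tens_act : Hom (TT (TT 𝟙 ⊗ Pc)) (TT 𝟙 ⊗ Pc) := (mu B 𝟙 ⊗h r) ⊚ T2 B (TT 𝟙) Pc.

Lemma tens_act_assoc : tens_act ⊚ Th tens_act = tens_act ⊚ mu B _.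
Proof.
  unfold tens_act. reassoc. rewrite <- T_comp, (compA_rw (eq_sym (T2_nat B _ _))). reassoc.
  rewrite (compA_rw (eq_sym (tensh_comp _ _ _ _ _))), mu_assoc, hact_assoc, tensh_comp.
  reassoc. rewrite mu_T2_assoc. reflexivity.
Qed.

Lemma tens_act_unit : tens_act ⊚ eta B _ = idm _.
Proof.
  unfold tens_act. reassoc. rewrite eta_T2, <- tensh_comp, mu_etal, hact_unit, tensh_id.
  reflexivity.
Qed.

Lemma fusion_T_coact : fusion tens_act ⊚ Th rho = (idm _ ⊗h rho) ⊚ fusion r.
Proof.
  unfold fusion. reassoc. rewrite T_comp, <- lunit_inv_nat, <- T_comp.
  rewrite (compA_rw (eq_sym (T2_nat_l B _ _))). reassoc.
  rewrite (compA_rw (eq_sym (tensh_comp_idl _ _ _))).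
  assert (E : tens_act ⊚ Th rho = rho ⊚ r)
    by (rewrite hcompat; unfold tens_act; reassoc; reflexivity).
  rewrite E, tensh_comp_idl. reassoc. reflexivity.
Qed.

Lemma fusion_T_eta1_tens : fusion tens_act ⊚ Th (eta1_tens B P)
  = cast (tens_assoc M (TT 𝟙) (TT 𝟙) Pc) ⊚ ((T1_coprod B ⊗h idm Pc) ⊚ fusion r).
Proof.
  unfold fusion, tens_act, eta1_tens. fold (lunit_inv Pc). rewrite tensh_comp_idl. reassoc.
  rewrite (compA_rw (T2_coassoc_inv _ _ _)). reassoc. rewrite !T_comp.
  assert (E : cast (eq_sym (tens_assoc M 𝟙 (TT 𝟙) Pc)) ⊚ (lunit_inv (TT 𝟙 ⊗ Pc) ⊚
     ((eta B 𝟙 ⊗h idm Pc) ⊚ lunit_inv Pc))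
     = (((idm 𝟙 ⊗h eta B 𝟙) ⊚ lunit_inv 𝟙) ⊗h idm Pc) ⊚ lunit_inv Pc).
  { rewrite comp_assoc, lunit_inv_tens, comp_assoc, <- tensh_comp, comp_idl,
      <- lunit_inv_nat. reflexivity. }
  rewrite E, <- T_comp, (compA_rw (eq_sym (T2_nat_r B _ _))). reassoc.
  rewrite (compA_rw (eq_sym (tensh_comp _ _ _ _ _))), comp_idl.
  rewrite (fhom_comp (T B) _ (lunit_inv 𝟙)), (comp_assoc (T2 B 𝟙 (TT 𝟙))),
    <- (T2_nat_l B 𝟙 (eta B 𝟙)).
  rewrite (comp_assoc (idm (TT 𝟙) ⊗h (mu B 𝟙 ⊗h r))),
    <- (tensh_assoc M (idm (TT 𝟙)) (mu B 𝟙) r).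
  reassoc. rewrite (compA_rw (eq_sym (tensh_comp _ _ _ _ _))), comp_idr.
  rewrite (compA_rw (eq_sym (tensh_comp_idl _ _ _))), mu_etar, tensh_id, comp_idl.
  rewrite (compA_rw (tensh_comp_idr_idl _ _)). unfold T1_coprod. reflexivity.
Qed.

Lemma T0_fusion : (T0 B ⊗h idm Pc) ⊚ fusion r = lunit_inv Pc ⊚ r.
Proof.
  unfold fusion. rewrite comp_assoc, tensh_comp_idr_idl, <- (tensh_comp_idl_idr (T0 B) r).
  reassoc. rewrite (compA_rw (T2_counitl B Pc)). fold (lunit_inv (TT Pc)). fold (lunit Pc).
  reassoc. rewrite T_comp, lunit_lunit_inv, fhom_id, comp_idr, lunit_inv_nat. reflexivity.
Qed.

Variables (E : C) (i : Hom E Pc).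
Hypothesis i_coinv : is_coinvariant_part B P i.
Hypothesis Ti_equalizer : is_equalizer (Th (eta1_tens B P)) (Th rho) (Th i).

Lemma coact_act_T_coinv : rho ⊚ (r ⊚ Th i) = fusion r ⊚ Th i.
Proof.
  rewrite comp_assoc, hcompat. reassoc. rewrite T_comp, <- (proj1 i_coinv).
  unfold eta1_tens. rewrite <- !T_comp. reassoc.
  rewrite (compA_rw (eq_sym (T2_nat_r B _ _))). reassoc.
  rewrite (compA_rw (eq_sym (tensh_comp _ _ _ _ _))), mu_etar, comp_idr.
  unfold fusion. reassoc. reflexivity.
Qed.

(* The inverse of [r ⊚ Th i] is the factorisation of [fusion_inv r ⊚ rho] through the
   equalizer [Th i]; that it equalizes is the coassociativity of [rho] seen through
   the fusion isomorphisms. *)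
Lemma act_T_coinv_iso : is_iso (r ⊚ Th i).
Proof.
  pose proof (fusion_fusion_inv (hact_assoc P) (hact_unit P)) as Fr1.
  pose proof (fusion_invK (hact_assoc P) (hact_unit P)) as Fr2.
  pose proof (fusion_fusion_inv tens_act_assoc tens_act_unit) as Ft1.
  pose proof (fusion_invK tens_act_assoc tens_act_unit) as Ft2.
  set (k := fusion_inv r ⊚ rho).
  assert (Hk : Th (eta1_tens B P) ⊚ k = Th rho ⊚ k).
  { apply (iso_monic (f := fusion tens_act)). { exists (fusion_inv tens_act); split; assumption. }
    rewrite !comp_assoc, fusion_T_eta1_tens, fusion_T_coact. unfold k. reassoc.
    rewrite !(comp_assoc (fusion r) (fusion_inv r)), Fr1, !comp_idl, (hcoact_coassoc P).
    reassoc. rewrite (compA_rw (cast_comp _ _)), cast_id, comp_idl. reflexivity. }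
  destruct (proj2 Ti_equalizer _ k Hk) as [s [Hs _]].
  exists s. split.
  - apply (equalizer_monic Ti_equalizer). reassoc. rewrite (compA_rw Hs). unfold k. reassoc.
    rewrite coact_act_T_coinv, (comp_assoc (fusion_inv r)), Fr2, comp_idl, comp_idr.
    reflexivity.
  - reassoc. rewrite Hs. unfold k.
    assert (E1 : r ⊚ fusion_inv r = lunit Pc ⊚ (T0 B ⊗h idm Pc)).
    { transitivity (lunit Pc ⊚ (lunit_inv Pc ⊚ (r ⊚ fusion_inv r))).
      { rewrite comp_assoc, lunit_lunit_inv, comp_idl. reflexivity. }
      rewrite (comp_assoc (lunit_inv Pc) r), <- T0_fusion. reassoc.
      rewrite Fr1, comp_idr. reflexivity. }
    rewrite (comp_assoc r), E1. reassoc. rewrite hcoact_counit. apply lunit_lunit_inv.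
Qed.
End CoinvariantCounit.
End PreHopf.

Section CoinvariantFunctor.
Context {C : Category} {M : StrictMonoidal C} {B : Bimonad M}.
Local Notation "f ⊗h g" := (tensh M f g) (at level 30).
Local Notation TT := (fob (T B)).
Local Notation Th := (fhom (T B)).

Section FromChoice.
Variables (E : HMob B -> C) (i : forall P, Hom (E P) (hcar P)).
Hypothesis i_coinv : forall P, is_coinvariant_part B P (i P).

Lemma coinvariant_factor (P Q : HMob B) (f : HMhom P Q) :
  exists u : Hom (E P) (E Q), i Q ⊚ u = hmap f ⊚ i P.
Proof.
  assert (H : eta1_tens B Q ⊚ (hmap f ⊚ i P) = hcoact Q ⊚ (hmap f ⊚ i P)).
  { rewrite comp_assoc, eta1_tens_nat. reassoc.
    rewrite (proj1 (i_coinv P)), comp_assoc, hmap_coact. reassoc. reflexivity. }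
  destruct (proj2 (i_coinv Q) _ _ H) as [u [Hu _]]. exists u; exact Hu.
Qed.

Definition coinvariant_hom (P Q : HMob B) (f : HMhom P Q) : Hom (E P) (E Q) :=
  proj1_sig (constructive_indefinite_description _ (coinvariant_factor f)).

Lemma coinvariant_hom_spec (P Q : HMob B) (f : HMhom P Q) :
  i Q ⊚ coinvariant_hom f = hmap f ⊚ i P.
Proof. exact (proj2_sig (constructive_indefinite_description _ (coinvariant_factor f))). Qed.

Lemma coinvariant_hom_id (P : HM B) : coinvariant_hom (idm P) = idm (E P).
Proof.
  apply (equalizer_monic (i_coinv P)). rewrite coinvariant_hom_spec. simpl.
  rewrite comp_idl, comp_idr. reflexivity.
Qed.

Lemma coinvariant_hom_comp (P Q R : HM B) (g : Hom Q R) (f : Hom P Q) :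
  coinvariant_hom (g ⊚ f) = coinvariant_hom g ⊚ coinvariant_hom f.
Proof.
  apply (equalizer_monic (i_coinv R)). rewrite coinvariant_hom_spec. simpl.
  rewrite comp_assoc, coinvariant_hom_spec. reassoc. rewrite coinvariant_hom_spec.
  reflexivity.
Qed.

Definition coinvariant_part_functor : Functor (HM B) C :=
  @Build_Functor (HM B) C E coinvariant_hom coinvariant_hom_id coinvariant_hom_comp.

Lemma coinvariant_part_functor_spec : coinvariant_functor B coinvariant_part_functor i.
Proof. split; [exact i_coinv | intros P Q f; apply coinvariant_hom_spec]. Qed.
End FromChoice.

Lemma coinvariant_functor_exists : admits_coinvariant_parts B ->
  exists (K : Functor (HM B) C) (i : forall P : HMob B, Hom (fob K P) (hcar P)),
    coinvariant_functor B K i.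
Proof.
  intros H.
  assert (H' : forall P : HMob B, exists x : {E : C & Hom E (hcar P)},
     is_coinvariant_part B P (projT2 x)).
  { intros P. destruct (H P) as [E [i Hi]]. exists (existT _ E i). exact Hi. }
  destruct (dependent_functional_choice H') as [f Hf].
  exists (coinvariant_part_functor Hf), (fun P => projT2 (f P)).
  apply coinvariant_part_functor_spec.
Qed.

Section QuasiInverseFromCoinvariants.
Hypothesis pre_Hopf : left_pre_Hopf B.
Hypothesis T_conservative : conservative B.
Hypothesis T_preserves : preserves_coinvariant_parts B.
Variables (K : Functor (HM B) C) (i : forall P : HMob B, Hom (fob K P) (hcar P)).
Hypothesis K_coinv : coinvariant_functor B K i.

(* [eta X] and [i (hl X)] are both coinvariant parts of [hl X] after applying [T]
   (by [T_eta_equalizer] and preservation), so the comparison map becomes invertible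
   under [T]; conservativity concludes. *)
Lemma unit_comparison_iso (X : C) (u : Hom X (fob K (hl_ob B X))) :
  i (hl_ob B X) ⊚ u = eta B X -> is_iso u.
Proof.
  intros Hu. apply T_conservative.
  apply (equalizer_comparison_iso (T_eta_equalizer pre_Hopf X)
           (T_preserves (proj1 K_coinv (hl_ob B X)))).
  rewrite <- Hu, fhom_comp. reflexivity.
Qed.

Lemma K_hl_iso_id : exists a : forall X : C, Hom (fob K (fob (hl B) X)) X,
  (forall (X Y : C) (f : Hom X Y), a Y ⊚ fhom K (fhom (hl B) f) = f ⊚ a X) /\
  (forall X, is_iso (a X)).
Proof.
  destruct K_coinv as [K_eq K_nat].
  assert (Hu : forall X : C, exists a : Hom (fob K (fob (hl B) X)) X,
      exists u, i (hl_ob B X) ⊚ u = eta B X /\ a ⊚ u = idm X /\ u ⊚ a = idm _).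
  { intros X. destruct (proj2 (K_eq (hl_ob B X)) X (eta B X) (eta_coinvariant X))
      as [u [Hu _]].
    destruct (unit_comparison_iso Hu) as [a [H1 H2]]. exists a, u. auto. }
  destruct (dependent_functional_choice Hu) as [a Ha]. exists a. split.
  - intros X Y f.
    destruct (Ha X) as [uX [HX1 [HX2 HX3]]]. destruct (Ha Y) as [uY [HY1 [HY2 HY3]]].
    assert (E : fhom K (fhom (hl B) f) ⊚ uX = uY ⊚ f).
    { apply (equalizer_monic (K_eq (hl_ob B Y))). rewrite comp_assoc, K_nat. simpl in *.
      reassoc. rewrite HX1, eta_nat, <- HY1. reassoc. reflexivity. }
    rewrite <- (comp_idr (a Y ⊚ _)), <- HX3. reassoc. rewrite (compA_rw E). reassoc.
    rewrite (compA_rw HY2), comp_idl. reflexivity.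
  - intros X. destruct (Ha X) as [uX [HX1 [HX2 HX3]]]. exists uX; split; assumption.
Qed.

Lemma hl_K_iso_id : exists b : forall P : HM B, Hom (fob (hl B) (fob K P)) P,
  (forall (P Q : HM B) (f : Hom P Q), b Q ⊚ fhom (hl B) (fhom K f) = f ⊚ b P) /\
  (forall P, is_iso (b P)).
Proof.
  destruct K_coinv as [K_eq K_nat].
  exists (fun P => free_ext (proj1 (K_eq P))). split.
  - intros P Q f. apply HMhom_ext. simpl. reassoc.
    rewrite T_comp, K_nat, <- T_comp, (comp_assoc (hact Q)), <- hmap_act. reassoc.
    reflexivity.
  - intros P. apply HM_iso. exact (act_T_coinv_iso pre_Hopf (K_eq P) (T_preserves (K_eq P))).
Qed.

Lemma coinvariant_functor_quasi_inverse : quasi_inverse (hl B) K.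
Proof. exact (conj K_hl_iso_id hl_K_iso_id). Qed.
End QuasiInverseFromCoinvariants.

Section FromEquivalence.
Variable G : Functor (HM B) C.
Hypothesis hl_G : quasi_inverse (hl B) G.

Lemma equivalence_conservative : conservative B.
Proof. intros X Y f Hf. apply (quasi_inverse_reflects_iso hl_G). apply HM_iso, Hf. Qed.

(* Every Hopf module is isomorphic to a free one [hl X], whose coinvariant part is [eta X]. *)
Lemma equivalence_coinvariant_part (P : HMob B) (b : HMhom (hl_ob B (fob G P)) P) :
  @is_iso (HM B) _ _ b -> is_coinvariant_part B P (hmap b ⊚ eta B (fob G P)).
Proof.
  intros Hb. split.
  - reassoc. apply hl_hom_eta_coinvariant.
  - intros E' j Hj. destruct Hb as [binv [Hb1 Hb2]].
    destruct (quasi_inverse_full hl_G (X := E') (Y := fob G P) (binv ⊚ free_ext Hj))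
      as [u Hu].
    assert (Hbu : forall v : Hom E' (fob G P), hmap b ⊚ eta B (fob G P) ⊚ v = j ->
       @comp (HM B) _ _ _ b (fhom (hl B) v) = free_ext Hj).
    { intros v Hv. apply HMhom_ext. simpl. rewrite hl_hom_eq_act_eta. simpl.
      rewrite <- Hv, (fhom_comp (T B) _ v). reassoc. reflexivity. }
    assert (Hu1 : hmap b ⊚ eta B (fob G P) ⊚ u = j).
    { transitivity (hmap b ⊚ (Th u ⊚ eta B E')).
      { rewrite (eta_nat B u). reassoc. reflexivity. }
      change (Th u) with (hmap (fhom (hl B) u)). rewrite Hu. simpl.
      reassoc. rewrite (comp_assoc (hmap b)).
      change (hmap b ⊚ hmap binv) with (hmap (@comp (HM B) _ _ _ b binv)). rewrite Hb2. simpl.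
      rewrite comp_idl, eta_nat, comp_assoc, hact_unit, comp_idl. reflexivity. }
    exists u. split; [exact Hu1|].
    intros u' Hu'. apply (quasi_inverse_faithful hl_G).
    apply (iso_monic (C := HM B) (f := b)); [exists binv; split; assumption|].
    rewrite (Hbu u Hu1), (Hbu u' Hu'). reflexivity.
Qed.

Lemma equivalence_admits_coinvariant_parts : admits_coinvariant_parts B.
Proof.
  intros P. destruct hl_G as [_ [b [_ Hb]]].
  exists (fob G P), (hmap (b P) ⊚ eta B (fob G P)).
  apply equivalence_coinvariant_part, Hb.
Qed.

(* A coinvariant part of [P] is isomorphic to [hmap (b P) ⊚ eta], which [T] preserves
   because [T (eta (G P))] is an equalizer and [T (hmap (b P))] is invertible. *)
Lemma equivalence_preserves_coinvariant_parts :
  left_pre_Hopf B -> preserves_coinvariant_parts B.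
Proof.
  intros pre_Hopf P E i Hi. pose proof hl_G as [_ [b [_ Hb]]].
  pose proof (equivalence_coinvariant_part (Hb P)) as Hi0.
  destruct (proj2 Hi0 _ i (proj1 Hi)) as [v [Hv _]].
  assert (Hviso : is_iso v) by exact (equalizer_comparison_iso Hi Hi0 (eq_sym Hv)).
  assert (HbP : is_iso (hmap (b P))) by exact (HM_iso_hmap (Hb P)).
  rewrite <- Hv, !fhom_comp.
  apply (equalizer_iso_transport (c := Th (idm (TT (unit M)) ⊗h hmap (b P)))
           (T_eta_equalizer pre_Hopf (fob G P))).
  - apply fhom_iso, HbP.
  - apply fhom_iso, tensh_iso; [apply iso_id | exact HbP].
  - apply fhom_iso, Hviso.
  - rewrite !T_comp, eta1_tens_nat. reflexivity.
  - rewrite !T_comp. f_equal. symmetry. exact (hmap_coact (b P)).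
Qed.
End FromEquivalence.
End CoinvariantFunctor.

Theorem mainTheorem17 (C : Category) (M : StrictMonoidal C) (B : Bimonad M) :
  left_pre_Hopf B ->
  (is_equivalence (hl B)
     <-> conservative B /\ admits_coinvariant_parts B /\ preserves_coinvariant_parts B) /\
  (is_equivalence (hl B) ->
     (exists (K : Functor (HM B) C) (i : forall P : HMob B, Hom (fob K P) (hcar P)),
         coinvariant_functor B K i) /\
     (forall (K : Functor (HM B) C) (i : forall P : HMob B, Hom (fob K P) (hcar P)),
         coinvariant_functor B K i -> quasi_inverse (hl B) K)).
Proof.
  intros pre_Hopf.
  assert (necessary : is_equivalence (hl B) ->
     conservative B /\ admits_coinvariant_parts B /\ preserves_coinvariant_parts B).
  { intros [G hl_G]. split; [|split].
    - exact (equivalence_conservative hl_G).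
    - exact (equivalence_admits_coinvariant_parts hl_G).
    - exact (equivalence_preserves_coinvariant_parts hl_G pre_Hopf). }
  split; [split|].
  - exact necessary.
  - intros [Hcons [Hadm Hpres]]. destruct (coinvariant_functor_exists Hadm) as [K [i Hi]].
    exists K. exact (coinvariant_functor_quasi_inverse pre_Hopf Hcons Hpres Hi).
  - intros Heq. destruct (necessary Heq) as [Hcons [Hadm Hpres]]. split.
    + exact (coinvariant_functor_exists Hadm).
    + intros K i Hi. exact (coinvariant_functor_quasi_inverse pre_Hopf Hcons Hpres Hi).
Qed.
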